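(* Let $t$ be a positive integer and let $M$ be a matroid with the $(t,2t)$-property. Let $C_1^*,C_2^*,\dotsc,C_{t-1}^*$ be pairwise disjoint cocircuits of $M$, and let $Y = E(M)-\bigcup_{i \in \{1,\dots,t-1\}} C_i^*$. Then for every $y \in Y$ there is a $2t$-element circuit $C_y$ of $M$ containing $y$ such that either (i) $|C_y \cap C_i^*| = 2$ for all $i \in \{1,\dots,t-1\}$, or (ii) $|C_y \cap C_j^*| = 3$ for some $j \in \{1,\dots,t-1\}$, and $|C_y \cap C_i^*| = 2$ for all $i \in \{1,\dots,t-1\}-\{j\}$. Moreover, if $C_y = S \cup \{y\}$ (with $y\notin S$) satisfies (ii), then there are at most $3t-1$ elements $w \in Y$ such that $S \cup \{w\}$ is a circuit of $M$.
   Context: A matroid $M$ has the $(t,2t)$-property if every $t$-element subset of $E(M)$ is contained in both a $2t$-element circuit and a $2t$-element cocircuit of $M$. *)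

From mathcomp Require Import all_boot.
Set Implicit Arguments. Unset Strict Implicit. Unset Printing Implicit Defensive.

(* A matroid whose ground set E(M) is the whole finite type T,
   given by its independent sets. *)
Record matroid (T : finType) := Matroid {
  indep : {set T} -> bool;
  indep0 : indep set0;
  indep_subset : forall A B : {set T}, B \subset A -> indep A -> indep B;
  indep_aug : forall A B : {set T}, indep A -> indep B -> #|A| < #|B| ->
     exists2 x, x \in B :\: A & indep (x |: A)
}.

Section MatroidDefs.
Variables (T : finType) (M : matroid T).

Definition is_circuit (C : {set T}) : bool :=
  ~~ indep M C && [forall D : {set T}, (D \proper C) ==> indep M D].

Definition is_basis (B : {set T}) : Prop :=
  indep M B /\ forall X : {set T}, indep M X -> B \subset X -> X = B.

Definition dual_indep (X : {set T}) : Prop :=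
  exists B : {set T}, is_basis B /\ X \subset ~: B.

Definition is_cocircuit (C : {set T}) : Prop :=
  ~ dual_indep C /\ forall D : {set T}, D \proper C -> dual_indep D.

Definition t2t_property (t : nat) : Prop :=
  forall X : {set T}, #|X| = t ->
    (exists C : {set T}, [/\ is_circuit C, #|C| = 2 * t & X \subset C]) /\
    (exists D : {set T}, [/\ is_cocircuit D, #|D| = 2 * t & X \subset D]).

End MatroidDefs.

From mathcomp Require Import all_boot zify.
Set Implicit Arguments. Unset Strict Implicit. Unset Printing Implicit Defensive.

(* Two facts about a cocircuit D drive the proof: an independent set avoiding D
   stays independent when any element of D is added (so a circuit never meets D
   in exactly one element), and removing D strictly lowers the rank of every set
   meeting it.  A 2t-circuit through y and one element of each C_i^* therefore
   meets every C_i^* at least twice, and these t-1 disjoint intersections fit in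
   the 2t-1 elements other than y, leaving room for a single extra element.
   For the bound, W = {w in Y | S + w is a circuit} is spanned by S, so
   S \cup W has rank 2t-1.  If |W| >= t, a 2t-cocircuit D through t elements of
   W meets S, whence |W \cap D| <= 2t-1; removing C_1^*, ..., C_{t-1}^* and D
   from S \cup W leaves rank at most t-1, while any t elements of W - D are
   independent, so |W - D| <= t-1. *)

Lemma card_bigcup_disjoint (T I : finType) (r : seq I) (F : I -> {set T}) :
  uniq r -> (forall i j, i != j -> [disjoint F i & F j]) ->
  #|\bigcup_(i <- r) F i| = \sum_(i <- r) #|F i|.
Proof.
move=> + dF; elim: r => [|i r IH] /=; first by rewrite !big_nil cards0.
case/andP=> ir ur; rewrite !big_cons -IH //; apply/eqP.
rewrite (leq_card_setU _ _).2 bigcup_seq; apply: bigcup_disjoint => j jr.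
by apply: dF; apply: contraNneq ir => ->.
Qed.

Lemma sum_excess_le1 (I : finType) (F : I -> nat) a :
  (forall i, a <= F i) -> \sum_i F i <= a * #|I| + 1 ->
  (forall i, F i = a) \/ exists j, F j = a.+1 /\ forall i, i != j -> F i = a.
Proof.
move=> aF; pose g i := F i - a.
have -> : \sum_i F i = \sum_i g i + a * #|I|.
  by rewrite mulnC -sum_nat_const -big_split; apply: eq_bigr => i _; rewrite /= subnK.
rewrite [leqRHS]addnC leq_add2r => sum_g.
case: (pickP (fun i => 0 < g i)) => [j gj|g0]; last first.
  by left=> i; apply/eqP; rewrite eqn_leq aF andbT -subn_eq0 eqn0Ngt g0.
right; move: sum_g; rewrite (bigD1 j) //= => sum_g.
have gj1 : g j = 1 by apply/eqP; rewrite eqn_leq gj (leq_trans (leq_addr _ _) sum_g).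
exists j; split => [|i ij]; first by rewrite -(subnK (aF j)) -/(g j) gj1 add1n.
have gi0 : g i <= 0.
  move: sum_g; rewrite gj1 add1n ltnS; apply: leq_trans.
  by rewrite (bigD1 i) //= leq_addr.
by apply/eqP; rewrite eqn_leq aF andbT -subn_eq0 -leqn0.
Qed.

Lemma subset_of_card (T : finType) (A : {set T}) k : k <= #|A| ->
  exists2 B : {set T}, B \subset A & #|B| = k.
Proof.
rewrite -bin_gt0 -cards_draws => /card_gt0P[B].
by rewrite inE => /andP[sBA /eqP cB]; exists B.
Qed.

Section Rank.
Variables (T : finType) (M : matroid T).

Definition rk (A : {set T}) : nat :=
  \max_(K : {set T} | (K \subset A) && indep M K) #|K|.

Lemma indep_leq_rk (A I : {set T}) : I \subset A -> indep M I -> #|I| <= rk A.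
Proof. by move=> sIA iI; apply: (leq_bigmax_cond I); rewrite sIA. Qed.

Lemma rk_attained (A : {set T}) :
  exists I : {set T}, [/\ I \subset A, indep M I & #|I| = rk A].
Proof.
have [|I /andP[sIA iI] eI] :=
  @eq_bigmax_cond _ (fun K : {set T} => (K \subset A) && indep M K) (fun K => #|K|).
  by apply/card_gt0P; exists set0; rewrite unfold_in sub0set indep0.
by exists I.
Qed.

Lemma maximal_indep_rk (A I : {set T}) : I \subset A -> indep M I ->
  (forall x, x \in A -> x \notin I -> ~~ indep M (x |: I)) -> #|I| = rk A.
Proof.
move=> sIA iI Imax; apply/eqP; rewrite eqn_leq indep_leq_rk //=.
have [J [sJA iJ <-]] := rk_attained A; rewrite leqNgt; apply/negP => ltIJ.
have [x /setDP[xJ xI] ixI] := indep_aug iI iJ ltIJ.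
by move: (Imax x (subsetP sJA x xJ) xI); rewrite ixI.
Qed.

Lemma indep_extend_rk (A I : {set T}) : I \subset A -> indep M I ->
  exists J : {set T}, [/\ I \subset J, J \subset A, indep M J & #|J| = rk A].
Proof.
move=> sIA iI; pose P (J : {set T}) := [&& I \subset J, J \subset A & indep M J].
have PI : P I by rewrite /P subxx sIA.
case: (@arg_maxnP _ I P (fun J => #|J|) PI) => J /and3P[sIJ sJA iJ] Jmax.
exists J; split => //; apply: maximal_indep_rk => // x xA xJ.
apply/negP => ixJ; have := Jmax (x |: J).
rewrite /P subUset sub1set xA sJA ixJ (subset_trans sIJ (subsetUr _ _)) cardsU1 xJ.
by move=> /(_ isT) /=; rewrite add1n ltnn.
Qed.

Lemma rk_setU1_dep (A J : {set T}) e : J \subset A -> indep M J -> #|J| = rk A ->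
  ~~ indep M (e |: J) -> rk (e |: A) = rk A.
Proof.
move=> sJA iJ eJ depJ; rewrite -eJ; symmetry; apply: maximal_indep_rk => //.
  exact: subset_trans sJA (subsetUr _ _).
move=> x /setU1P[-> //|xA] xJ; apply/negP => ixJ.
have := indep_leq_rk (_ : x |: J \subset A) ixJ.
by rewrite cardsU1 xJ eJ ltnn subUset sub1set xA sJA => /(_ isT).
Qed.

Lemma basis_card (B : {set T}) : is_basis M B -> #|B| = rk setT.
Proof.
case=> iB Bmax; apply: maximal_indep_rk => // x _ xB; apply/negP => ixB.
by move: xB; rewrite -(Bmax _ ixB (subsetUr _ _)) setU11.
Qed.

Lemma indep_rk_basis (B : {set T}) : indep M B -> rk setT <= #|B| -> is_basis M B.
Proof.
move=> iB leB; split=> // X iX sBX; apply/eqP; rewrite eq_sym eqEcard sBX.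
exact: leq_trans (indep_leq_rk (subsetT X) iX) leB.
Qed.

Lemma basis_exists : exists B : {set T}, is_basis M B.
Proof.
have [B [_ _ iB eB]] := indep_extend_rk (sub0set setT) (indep0 M).
by exists B; apply: indep_rk_basis; rewrite ?eB.
Qed.

End Rank.

Section Cocircuit.
Variables (T : finType) (M : matroid T).
Local Notation rk := (rk M).

Lemma cocircuit_neq0 (D : {set T}) : is_cocircuit M D -> D != set0.
Proof.
case=> nD _; apply: contra_notN nD => /eqP->.
by have [B hB] := basis_exists M; exists B; rewrite sub0set.
Qed.

Lemma rk_setC_lt (D : {set T}) : ~ dual_indep M D -> rk (~: D) < rk setT.
Proof.
move=> nD; rewrite ltnNge; apply/negP => le.
have [B [_ sB iB eB]] := indep_extend_rk (sub0set (~: D)) (indep0 M).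
by apply: nD; exists B; rewrite subsetC; split=> //; apply: indep_rk_basis; rewrite ?eB.
Qed.

Lemma cocircuit_rk_setU1C (D : {set T}) e : is_cocircuit M D -> e \in D ->
  rk setT <= rk (e |: ~: D).
Proof.
case=> _ hD eD; have [B [hB sB]] := hD _ (properD1 eD).
rewrite -(basis_card hB); apply: indep_leq_rk hB.1.
by rewrite subsetC setCD setUC in sB.
Qed.

Lemma cocircuit_indepU1 (D I : {set T}) e : is_cocircuit M D -> indep M I ->
  [disjoint I & D] -> e \in D -> indep M (e |: I).
Proof.
move=> hD iI dID eD; rewrite disjoints_subset in dID.
have [J [sIJ sJ iJ eJ]] := indep_extend_rk dID iI.
apply/negPn/negP => depI.
have depJ : ~~ indep M (e |: J) by apply: contra depI; apply/indep_subset/setUS.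
have := cocircuit_rk_setU1C hD eD.
by rewrite (rk_setU1_dep sJ iJ eJ depJ) leqNgt (rk_setC_lt hD.1).
Qed.

Lemma circuit_cocircuit_meet (C D : {set T}) x : is_circuit M C -> is_cocircuit M D ->
  x \in C :&: D -> 1 < #|C :&: D|.
Proof.
move=> /andP[depC /forallP Cmin] hD xCD; rewrite ltnNge; apply/negP => le1.
have eCD : C :&: D = [set x] by apply/eqP; rewrite eq_sym eqEcard sub1set xCD cards1.
have /setIP[xC xD] := xCD.
have iCx : indep M (C :\ x) by apply: (implyP (Cmin _)); apply: properD1.
have dCx : [disjoint C :\ x & D] by rewrite -setI_eq0 setIDAC eCD setDv.
by rewrite -(setD1K xC) (cocircuit_indepU1 hD iCx dCx xD) in depC.
Qed.

Lemma rk_setD_cocircuit (A D : {set T}) x : is_cocircuit M D -> x \in A -> x \in D ->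
  rk (A :\: D) < rk A.
Proof.
move=> hD xA xD; have [I [sI iI <-]] := rk_attained M (A :\: D).
move: sI; rewrite subsetD => /andP[sIA dID].
have xI : x \notin I by apply/negP => /(disjointFr dID); rewrite xD.
have := indep_leq_rk _ (cocircuit_indepU1 hD iI dID xD).
by rewrite cardsU1 xI; apply; rewrite subUset sub1set xA.
Qed.

Lemma rk_setD_bigcup (I : finType) (r : seq I) (D : I -> {set T}) (N : {set T}) :
  uniq r -> (forall i, is_cocircuit M (D i)) ->
  (forall i j, i != j -> [disjoint D i & D j]) ->
  (forall i, exists2 x, x \in N & x \in D i) ->
  rk (N :\: \bigcup_(i <- r) D i) + size r <= rk N.
Proof.
move=> + hD dD hN; elim: r => [|i r IH] /=; first by rewrite big_nil setD0 addn0.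
case/andP=> ir ur; rewrite big_cons (setUC (D i)) -setDDl addnS.
have [x xN xi] := hN i.
have xr : x \notin \bigcup_(j <- r) D j.
  rewrite bigcup_seq; apply/bigcupP => -[j jr xj].
  have ij : i != j by apply: contraNneq ir => ->.
  by rewrite (disjointFr (dD _ _ ij) xi) in xj.
apply: leq_trans (IH ur); rewrite -addSn leq_add2r.
by apply: rk_setD_cocircuit (hD i) _ xi; rewrite inE xr xN.
Qed.

End Cocircuit.

Section Property_t2t.
Variables (T : finType) (M : matroid T) (t : nat) (Cs : 'I_t.-1 -> {set T}).
Hypotheses (t_gt0 : 0 < t) (M_t2t : t2t_property M t).
Hypotheses (Cs_cocircuit : forall i, is_cocircuit M (Cs i))
           (Cs_disjoint : forall i j, i != j -> [disjoint Cs i & Cs j]).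

Local Notation Y := (~: \bigcup_(i < t.-1) Cs i).

Lemma t2t_indep (X : {set T}) : #|X| = t -> indep M X.
Proof.
move=> cX; have [[C [/andP[_ /forallP Cmin] cC sXC]] _] := M_t2t cX.
by apply: (implyP (Cmin X)); rewrite properEcard sXC cC cX /=; lia.
Qed.

Lemma notin_Cs y i : y \in Y -> y \notin Cs i.
Proof. by rewrite inE; apply: contra => yi; apply/bigcupP; exists i. Qed.

Lemma circuit_through_transversal y : y \in Y ->
  exists C : {set T}, [/\ is_circuit M C, #|C| = 2 * t, y \in C &
                         forall i, 1 < #|C :&: Cs i|].
Proof.
move=> yY; have /fin_all_exists[c cCs] : forall i, exists x, x \in Cs i.
  by move=> i; apply/set0Pn/cocircuit_neq0.
have c_inj : injective c.
  move=> i j cij; apply: contraTeq (cCs i) => ij.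
  by rewrite cij (disjointFl (Cs_disjoint ij) (cCs j)).
have yc : y \notin c @: setT.
  by apply/negP => /imsetP[i _ yci]; move: (notin_Cs i yY); rewrite yci cCs.
have cX : #|y |: c @: setT| = t.
  by rewrite cardsU1 yc card_imset // cardsT card_ord add1n prednK.
have [[C [circC cC sXC]] _] := M_t2t cX.
exists C; split => //; first by rewrite (subsetP sXC) ?setU11.
move=> i; apply: (circuit_cocircuit_meet circC (Cs_cocircuit i)) (_ : c i \in _).
by rewrite inE cCs (subsetP sXC) // setU1r // imset_f.
Qed.

Lemma sum_card_meet_lt y (C : {set T}) : y \in Y -> y \in C ->
  \sum_i #|C :&: Cs i| < #|C|.
Proof.
move=> yY yC; have dCs i j : i != j -> [disjoint C :&: Cs i & C :&: Cs j].
  by move=> ij; apply: disjointW (Cs_disjoint ij); apply: subsetIr.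
rewrite -(card_bigcup_disjoint (index_enum_uniq _) dCs).
apply: proper_card; apply/properP; split; first by apply/bigcupsP => i _; apply: subsetIl.
exists y => //; apply/bigcupP => -[i _ /setIP[_ yi]].
by move: (notin_Cs i yY); rewrite yi.
Qed.

Lemma circuit_meet_Cs_dichotomy y : y \in Y ->
  exists C : {set T},
    [/\ is_circuit M C, #|C| = 2 * t, y \in C &
     (forall i, #|C :&: Cs i| = 2) \/
     (exists j, #|C :&: Cs j| = 3 /\ forall i, i != j -> #|C :&: Cs i| = 2)].
Proof.
move=> yY; have [C [circC cC yC meet2]] := circuit_through_transversal yY.
exists C; split => //; apply: sum_excess_le1 => //.
have := sum_card_meet_lt yY yC; rewrite cC card_ord; lia.
Qed.

Section Spanned.
Variables (S W : {set T}).
Hypotheses (S_indep : indep M S) (S_card : #|S| = 2 * t - 1)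
           (S_meets_Cs : forall i, exists2 x, x \in S & x \in Cs i).
Hypotheses (W_sub_Y : W \subset Y) (W_spanned : forall w, w \in W -> ~~ indep M (w |: S)).

Lemma card_spanned_setD_cocircuit_lt (D : {set T}) x :
  is_cocircuit M D -> x \in W :&: D -> #|W :\: D| < t.
Proof.
move=> hD /setIP[xW xD]; rewrite ltnNge; apply/negP => /subset_of_card[Z sZ cZ].
set N := S :|: W; set U := \bigcup_(i < t.-1) Cs i.
have rkN : rk M N = 2 * t - 1.
  rewrite -S_card; symmetry; apply: maximal_indep_rk => [||w]; rewrite ?subsetUl //.
  by case/setUP=> [->//|/W_spanned].
have sWNU : W \subset N :\: U by rewrite subsetD subsetUr disjoints_subset.
have N_meets_Cs i : exists2 z, z \in N & z \in Cs i.
  by have [z zS zi] := S_meets_Cs i; exists z; rewrite ?inE ?zS.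
have chain := rk_setD_bigcup (index_enum_uniq _) Cs_cocircuit Cs_disjoint N_meets_Cs.
have size_t : size (index_enum 'I_t.-1) = t.-1.
  by rewrite [index_enum _]unlock -enumT -cardT card_ord.
have drop := rk_setD_cocircuit hD (subsetP sWNU x xW) xD.
have := indep_leq_rk (subset_trans sZ (setSD D sWNU)) (t2t_indep cZ).
move: chain drop; rewrite -/U size_t rkN cZ; lia.
Qed.

Lemma card_spanned_le : #|W| <= 3 * t - 2.
Proof.
have [ltWt|/subset_of_card[X sXW cX]] := ltnP #|W| t; first by lia.
have [_ [D [hD cD sXD]]] := M_t2t cX.
have [x xX] : exists x, x \in X by apply/card_gt0P; rewrite cX.
have xWD : x \in W :&: D by rewrite inE (subsetP sXW) ?(subsetP sXD).
have [s sSD] : exists s, s \in S :&: D.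
  apply/set0Pn; rewrite setI_eq0; apply: contraL (W_spanned (subsetP sXW x xX)).
  by move=> dSD; rewrite negbK (cocircuit_indepU1 hD S_indep dSD (subsetP sXD x xX)).
have /setIP[sS sD] := sSD.
have WD_le : #|W :&: D| <= #|D :\ s|.
  apply/subset_leq_card/subsetP => w /setIP[wW wD]; rewrite !inE wD andbT.
  by apply: contraTneq (W_spanned wW) => ->; rewrite negbK (setUidPr _) ?sub1set.
move: WD_le (card_spanned_setD_cocircuit_lt hD xWD) (cardsD1 s D).
rewrite -(cardsID D W) sD cD; lia.
Qed.

End Spanned.

Lemma card_circuit_completions_le (S : {set T}) y :
  y \in Y -> y \notin S -> is_circuit M (y |: S) -> #|y |: S| = 2 * t ->
  (exists j, #|(y |: S) :&: Cs j| = 3 /\ forall i, i != j -> #|(y |: S) :&: Cs i| = 2) ->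
  #|[set w in Y | is_circuit M (w |: S)]| <= 3 * t - 1.
Proof.
move=> yY yS /andP[_ /forallP Cmin] cyS [j [cj ci]].
have S_indep : indep M S.
  by apply: (implyP (Cmin S)); rewrite -{1}(setU1K yS) properD1 // setU11.
have S_card : #|S| = 2 * t - 1 by move: cyS; rewrite cardsU1 yS; lia.
have S_meets_Cs i : exists2 x, x \in S & x \in Cs i.
  have : 0 < #|(y |: S) :&: Cs i| by case: (eqVneq i j) => [->|/ci->]; rewrite ?cj.
  case/card_gt0P => x /setIP[/setU1P[-> yi|xS xi]]; last by exists x.
  by move: (notin_Cs i yY); rewrite yi.
have W_sub_Y : [set w in Y | is_circuit M (w |: S)] \subset Y.
  by apply/subsetP => w; rewrite inE => /andP[].
have W_spanned w : w \in [set w in Y | is_circuit M (w |: S)] -> ~~ indep M (w |: S).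
  by rewrite inE => /andP[_ /andP[]].
have := card_spanned_le S_indep S_card S_meets_Cs W_sub_Y W_spanned; lia.
Qed.

End Property_t2t.

Theorem lemma5p3 (T : finType) (M : matroid T) (t : nat)
  (Cs : 'I_t.-1 -> {set T}) :
  0 < t ->
  t2t_property M t ->
  (forall i, is_cocircuit M (Cs i)) ->
  (forall i j, i != j -> [disjoint Cs i & Cs j]) ->
  let Y := ~: \bigcup_(i < t.-1) Cs i in
  (forall y, y \in Y ->
     exists C : {set T},
       [/\ is_circuit M C, #|C| = 2 * t, y \in C &
        (forall i, #|C :&: Cs i| = 2) \/
        (exists j, #|C :&: Cs j| = 3 /\
           forall i, i != j -> #|C :&: Cs i| = 2)]) /\
  (forall (S : {set T}) (y : T),
     y \in Y -> y \notin S ->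
     is_circuit M (y |: S) -> #|y |: S| = 2 * t ->
     (exists j, #|(y |: S) :&: Cs j| = 3 /\
        forall i, i != j -> #|(y |: S) :&: Cs i| = 2) ->
     #|[set w in Y | is_circuit M (w |: S)]| <= 3 * t - 1).
Proof.
move=> t_gt0 M_t2t Cs_cocircuit Cs_disjoint Y; split.
  exact: circuit_meet_Cs_dichotomy.
exact: card_circuit_completions_le.
Qed.
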